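(* Let $(P,Q,n)$ be a CI-problem over a field $\mathbb{K}$, and let the intervals $\mathcal I_i,\mathcal J_j\subseteq\mathbf{Z}^2$ ($1\le i,j\le n$) and the integer $m=|P|+|Q|$ be as constructed in the context. If $(i,j)\notin P$, then $\mathrm{Hom}(I^{\mathcal I_i},I^{\mathcal J_j}(1))\cong\mathbb{K}$; more precisely, every morphism $f:I^{\mathcal I_i}\to I^{\mathcal J_j}(1)$ is determined by $f_{(2m+1,2m+1)}\in\mathbb{K}$, and for every $p\in\mathbf{Z}^2$, either $f_p=0$ or $f_p=f_{(2m+1,2m+1)}$. Symmetrically, if $(j,i)\notin Q$, then $\mathrm{Hom}(I^{\mathcal J_j},I^{\mathcal I_i}(1))\cong\mathbb{K}$ with every morphism $g$ determined by $g_{(2m+1,2m+1)}$ and $g_p\in\{0,g_{(2m+1,2m+1)}\}$ for all $p$.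
   Context: A constrained invertibility (CI) problem is a triple $(P,Q,n)$ with $P,Q\subseteq\{1,\dots,n\}^2$; it is solvable if there is an invertible $n\times n$ matrix $A$ over $\mathbb{K}$ with $A_{i,j}=0$ for all $(i,j)\in P$ and $(A^{-1})_{i',j'}=0$ for all $(i',j')\in Q$. Modules are functors $\mathbf{Z}^2\to\mathbf{Vec}_{\mathbb{K}}$ with the product order on $\mathbf{Z}^2$; $M(1)$ denotes the shift $M(1)_a=M_{a+(1,1)}$. For an interval $\mathcal J\subseteq\mathbf{Z}^2$, $I^{\mathcal J}$ is the interval module ($\mathbb{K}$ on $\mathcal J$, $0$ elsewhere, identity maps within $\mathcal J$, zero otherwise). Construction: let $m=|P|+|Q|$. For $p\in\mathbf{Z}^2$ let $\langle p\rangle=\{q\in\mathbf{Z}^2: p\le q\le(2m+2,2m+2)\}$. Let $\mathcal W=\bigcup_{k=0}^m\langle(2m-2k,2k)\rangle$ and $x_k=(2m-2k+1,2k-1)$ for $k=1,\dots,m$. Enumerate $P=\{(p_1,q_1),\dots,(p_r,q_r)\}$ and $Q=\{(p_{r+1},q_{r+1}),\dots,(p_m,q_m)\}$. Set $\mathcal I_i^0=\mathcal J_i^0=\mathcal W$ for all $i$. For $k=1,\dots,r$: $\mathcal I_i^k=\mathcal I_i^{k-1}\cup\langle x_k-(1,1)\rangle$ if $i=p_k$, else $\mathcal I_i^{k-1}\cup\langle x_k\rangle$; $\mathcal J_i^k=\mathcal J_i^{k-1}$ if $i=q_k$, else $\mathcal J_i^{k-1}\cup\langle x_k\rangle$. For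 $k=r+1,\dots,m$: $\mathcal I_i^k=\mathcal I_i^{k-1}$ if $i=q_k$, else $\mathcal I_i^{k-1}\cup\langle x_k\rangle$; $\mathcal J_i^k=\mathcal J_i^{k-1}\cup\langle x_k-(1,1)\rangle$ if $i=p_k$, else $\mathcal J_i^{k-1}\cup\langle x_k\rangle$. Finally $\mathcal I_i=\mathcal I_i^m$, $\mathcal J_i=\mathcal J_i^m$. *)

From HB Require Import structures.
From mathcomp Require Import all_boot all_order all_algebra.
Set Implicit Arguments. Unset Strict Implicit. Unset Printing Implicit Defensive.
Import Order.TTheory GRing.Theory Num.Theory.
Local Open Scope ring_scope.

Definition pt := (int * int)%type.
Definition leZ2 (p q : pt) : bool := (p.1 <= q.1) && (p.2 <= q.2).
Definition addpt (p q : pt) : pt := (p.1 + q.1, p.2 + q.2).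

Definition box (m : nat) (p : pt) : pred pt :=
  fun q => leZ2 p q && leZ2 q ((2 * m + 2)%:Z, (2 * m + 2)%:Z).

Definition Wset (m : nat) : pred pt :=
  fun q => has (fun k : nat => box m ((2 * m)%:Z - (2 * k)%:Z, (2 * k)%:Z) q)
               (iota 0 m.+1).

Definition xk (m k : nat) : pt :=
  ((2 * m)%:Z - (2 * k)%:Z + 1, (2 * k)%:Z - 1).
Definition xk' (m k : nat) : pt := addpt (xk m k) (-1, -1).

(* A CI-problem (P,Q,n): P and Q are given by enumerations (seq of pairs
   of indices in {1..n}); the k-th pair (1-indexed) of P ++ Q is
   (p_k, q_k), k = 1..m, with r = |P|. *)
Definition mCI (P Q : seq (nat * nat)) : nat := size P + size Q.
Definition pk (P Q : seq (nat * nat)) (k : nat) : nat := (nth (0, 0)%N (P ++ Q) k.-1).1.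
Definition qk (P Q : seq (nat * nat)) (k : nat) : nat := (nth (0, 0)%N (P ++ Q) k.-1).2.

Fixpoint Icon (P Q : seq (nat * nat)) (i : nat) (k : nat) : pred pt :=
  match k with
  | 0 => Wset (mCI P Q)
  | k'.+1 => fun q =>
      Icon P Q i k' q ||
      (if (k <= size P)%N then
         (if i == pk P Q k then box (mCI P Q) (xk' (mCI P Q) k) q
          else box (mCI P Q) (xk (mCI P Q) k) q)
       else
         (if i == qk P Q k then false
          else box (mCI P Q) (xk (mCI P Q) k) q))
  end.

Fixpoint Jcon (P Q : seq (nat * nat)) (i : nat) (k : nat) : pred pt :=
  match k with
  | 0 => Wset (mCI P Q)
  | k'.+1 => fun q =>
      Jcon P Q i k' q ||
      (if (k <= size P)%N then
         (if i == qk P Q k then false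
          else box (mCI P Q) (xk (mCI P Q) k) q)
       else
         (if i == pk P Q k then box (mCI P Q) (xk' (mCI P Q) k) q
          else box (mCI P Q) (xk (mCI P Q) k) q))
  end.

Definition Ical (P Q : seq (nat * nat)) (i : nat) : pred pt := Icon P Q i (mCI P Q).
Definition Jcal (P Q : seq (nat * nat)) (i : nat) : pred pt := Jcon P Q i (mCI P Q).

(* Finite-dimensional modules over Z^2 (pointwise dimensions and structure
   matrices, acting on row vectors: x |-> x *m pmap p q for p <= q). *)
Record pmod (K : fieldType) := PMod {
  pdim : pt -> nat;
  pmap : forall p q : pt, 'M[K]_(pdim p, pdim q) }.

Definition intmod (K : fieldType) (J : pred pt) : pmod K :=
  @PMod K (fun p => nat_of_bool (J p))
    (fun p q => \matrix_(x, y) (if J p && J q then 1 else 0)).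

Definition shift1 (K : fieldType) (M : pmod K) : pmod K :=
  @PMod K (fun p => pdim M (addpt p (1, 1)))
    (fun p q => pmap M (addpt p (1, 1)) (addpt q (1, 1))).

Definition is_morph (K : fieldType) (M N : pmod K)
  (f : forall p, 'M[K]_(pdim M p, pdim N p)) : Prop :=
  forall p q : pt, leZ2 p q -> pmap M p q *m f q = f p *m pmap N p q.
Arguments is_morph {K} M N f.

From HB Require Import structures.
From mathcomp Require Import all_boot all_order all_algebra.
From mathcomp Require Import zify.
Import Order.TTheory GRing.Theory Num.Theory.
Set Implicit Arguments. Unset Strict Implicit.
Local Open Scope ring_scope.

(* Let c = (2m+1, 2m+1).  All intervals of the construction lie below
   c + (1,1), so J_j(1) lies below c, and I_i is up-closed below c.  If
   moreover I_i ∩ ↓c ⊆ J_j(1), naturality against the structure map p -> c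
   forces every entry of a morphism I^{I_i} -> I^{J_j}(1) to equal its entry
   at c, while the constant family is a morphism; hence Hom ≅ K.  The
   inclusion is checked box by box: <x_k>(1) already lies in W, and
   <x_k - (1,1)>(1) is <x_k> (below the corner), which is missing from J_j
   only when (i,j) = (p_k,q_k) ∈ P.  The case of Q is symmetric. *)

Section BoolOrdinals.

Variable b : bool.

Lemma ord_bool_true (x : 'I_b) : b.
Proof. by case: b x => // -[]. Qed.

Lemma ord_bool_eq (x y : 'I_b) : x = y.
Proof. by apply: val_inj; case: b x y => -[[|?] ?] [[|?] ?]. Qed.

Definition ord_bool0 (hb : b) : 'I_b := Ordinal (etrans (lt0b b) hb).

Lemma sum_ord_bool (V : nmodType) (hb : b) (F : 'I_b -> V) :
  \sum_(z < b) F z = F (ord_bool0 hb).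
Proof.
rewrite (bigD1 (ord_bool0 hb)) //= big1 ?addr0 // => z.
by rewrite (ord_bool_eq z (ord_bool0 hb)) eqxx.
Qed.

End BoolOrdinals.

Lemma leZ2_refl p : leZ2 p p.
Proof. by rewrite /leZ2 !lexx. Qed.

Lemma leZ2_trans p q r : leZ2 p q -> leZ2 q r -> leZ2 p r.
Proof. rewrite /leZ2 => /andP[h1 h2] /andP[h3 h4]; apply/andP; split; lia. Qed.

Lemma leZ2_shift p : leZ2 p (addpt p (1, 1)).
Proof. by rewrite /leZ2 /addpt /=; apply/andP; split; lia. Qed.

Section IntervalModuleHom.

Variables (K : fieldType) (A B : pred pt) (c : pt).
Hypotheses (Ac : A c) (Bc : B c).
Hypothesis B_below : forall p, B p -> leZ2 p c.
Hypothesis A_upclosed : forall p q, leZ2 p q -> leZ2 q c -> A p -> A q.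
Hypothesis A_sub_B : forall p, leZ2 p c -> A p -> B p.

Lemma intmod_morph_entry f : is_morph (intmod K A) (intmod K B) f ->
  forall p x y, f p x y = f c (ord_bool0 Ac) (ord_bool0 Bc).
Proof.
move=> f_morph p x y.
have Ap : A p := ord_bool_true x.
have Bp : B p := ord_bool_true y.
move/matrixP/(_ x (ord_bool0 Bc)): (f_morph p c (B_below Bp)).
rewrite !mxE /= (sum_ord_bool Ac) (sum_ord_bool Bp) !mxE.
rewrite (_ : A p && A c) ?Ap // (_ : B p && B c) ?Bp //.
by rewrite mul1r mulr1 => ->; congr (f p x); exact: ord_bool_eq.
Qed.

Lemma intmod_const_morph (a : K) :
  is_morph (intmod K A) (intmod K B) (fun p => const_mx a).
Proof.
move=> p q pq; apply/matrixP => x y.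
have Ap : A p := ord_bool_true x.
have Bq : B q := ord_bool_true y.
have qc := B_below Bq.
have Aq := A_upclosed pq qc Ap.
have Bp := A_sub_B (leZ2_trans pq qc) Ap.
rewrite !mxE /= (sum_ord_bool Aq) (sum_ord_bool Bp) !mxE.
by rewrite Ap Aq Bp Bq mul1r mulr1.
Qed.

Lemma hom_intmod_scalar :
  let M := intmod K A in
  let N := intmod K B in
  [/\ pdim M c = 1%N, pdim N c = 1%N,
      (forall a : K, exists f, is_morph M N f /\ forall x y, f c x y = a),
      (forall f g, is_morph M N f -> is_morph M N g ->
         (forall x y, f c x y = g c x y) -> forall p, f p = g p) &
      (forall f, is_morph M N f -> forall a : K, (forall x y, f c x y = a) ->
         forall p, f p = 0 \/ forall x y, f p x y = a)].
Proof.
move=> M N; split=> /=; rewrite ?Ac ?Bc //.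
- move=> a; exists (fun p => const_mx a).
  by split; [exact: intmod_const_morph | move=> x y; rewrite mxE].
- move=> f g f_morph g_morph fg p; apply/matrixP => x y.
  by rewrite (intmod_morph_entry f_morph) (intmod_morph_entry g_morph) fg.
- move=> f f_morph a fc p.
  have [/andP[Ap Bp]|nAB] := boolP (A p && B p).
    by right=> x y; rewrite (intmod_morph_entry f_morph) fc.
  left; apply/matrixP => x y; case/negP: nAB.
  by rewrite (ord_bool_true x) (ord_bool_true y).
Qed.

End IntervalModuleHom.

Definition corner (m : nat) : pt := ((2 * m + 2)%:Z, (2 * m + 2)%:Z).
Definition mid (m : nat) : pt := ((2 * m + 1)%:Z, (2 * m + 1)%:Z).

Lemma leZ2_shift_corner m p :
  leZ2 (addpt p (1, 1)) (corner m) = leZ2 p (mid m).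
Proof. by rewrite /leZ2 /addpt /=; apply/andP/andP => -[h1 h2]; split; lia. Qed.

Lemma box_upclosed m g p q : leZ2 p q -> leZ2 q (corner m) ->
  box m g p -> box m g q.
Proof. by move=> pq qT /andP[gp _]; rewrite /box qT (leZ2_trans gp pq). Qed.

Lemma box_below m g q : box m g q -> leZ2 q (corner m).
Proof. by case/andP. Qed.

Lemma Wset_upclosed m p q : leZ2 p q -> leZ2 q (corner m) ->
  Wset m p -> Wset m q.
Proof.
move=> pq qT /hasP[k kin hk]; apply/hasP; exists k => //.
exact: box_upclosed hk.
Qed.

Lemma Wset_below m q : Wset m q -> leZ2 q (corner m).
Proof. by case/hasP=> k _ /box_below. Qed.

Lemma Wset_above_mid m q : leZ2 (mid m) q -> leZ2 q (corner m) -> Wset m q.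
Proof.
move=> cq qT; apply/hasP; exists 0%N; first by rewrite mem_iota.
apply/andP; split => //; move: cq; rewrite /leZ2 /mid /=.
by case/andP=> h1 h2; apply/andP; split; lia.
Qed.

Lemma mid_corner m : leZ2 (mid m) (corner m).
Proof. by rewrite /leZ2 /=; apply/andP; split; lia. Qed.

Lemma Wset_shift_mid m : Wset m (addpt (mid m) (1, 1)).
Proof. by apply: Wset_above_mid; rewrite ?leZ2_shift ?leZ2_shift_corner ?leZ2_refl. Qed.

Lemma box_xk_shift_Wset m k p : (k <= m)%N -> box m (xk m k) p ->
  leZ2 (addpt p (1, 1)) (corner m) -> Wset m (addpt p (1, 1)).
Proof.
move=> km /andP[xp _] pT; apply/hasP; exists k; first by rewrite mem_iota; lia.
apply/andP; split => //; move: xp; rewrite /leZ2 /xk /addpt /=.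
by case/andP=> h1 h2; apply/andP; split; lia.
Qed.

Lemma box_xk'_shift m k p : box m (xk' m k) p ->
  leZ2 (addpt p (1, 1)) (corner m) -> box m (xk m k) (addpt p (1, 1)).
Proof.
case/andP=> xp _ pT; apply/andP; split => //; move: xp.
by rewrite /leZ2 /xk' /xk /addpt /= => /andP[h1 h2]; apply/andP; split; lia.
Qed.

Section Construction.

Variables (P Q : seq (nat * nat)).
Local Notation m := (mCI P Q).

Lemma Icon_upclosed i k p q : leZ2 p q -> leZ2 q (corner m) ->
  Icon P Q i k p -> Icon P Q i k q.
Proof.
move=> pq qT; elim: k => [|k IH] /=; first exact: Wset_upclosed.
case/orP=> [/IH -> //|]; rewrite orbC.
by do 2 case: ifP => _ //; move/(box_upclosed pq qT) ->.
Qed.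

Lemma Jcon_upclosed j k p q : leZ2 p q -> leZ2 q (corner m) ->
  Jcon P Q j k p -> Jcon P Q j k q.
Proof.
move=> pq qT; elim: k => [|k IH] /=; first exact: Wset_upclosed.
case/orP=> [/IH -> //|]; rewrite orbC.
by do 2 case: ifP => _ //; move/(box_upclosed pq qT) ->.
Qed.

Lemma Icon_below i k q : Icon P Q i k q -> leZ2 q (corner m).
Proof.
elim: k => [|k IH] /=; first exact: Wset_below.
by case/orP=> [/IH //|]; do 2 case: ifP => _ //; exact: box_below.
Qed.

Lemma Jcon_below j k q : Jcon P Q j k q -> leZ2 q (corner m).
Proof.
elim: k => [|k IH] /=; first exact: Wset_below.
by case/orP=> [/IH //|]; do 2 case: ifP => _ //; exact: box_below.
Qed.

Lemma Wset_Icon i k q : Wset m q -> Icon P Q i k q.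
Proof. by elim: k => [|k IH] //= /IH ->. Qed.

Lemma Wset_Jcon j k q : Wset m q -> Jcon P Q j k q.
Proof. by elim: k => [|k IH] //= /IH ->. Qed.

Lemma pair_k_in_P k : (1 <= k <= size P)%N -> (pk P Q k, qk P Q k) \in P.
Proof.
case: k => [|k] //= kP; rewrite /pk /qk -surjective_pairing nth_cat /=.
by rewrite (_ : (k < size P)%N) ?mem_nth //; lia.
Qed.

Lemma pair_k_in_Q k : (size P < k <= m)%N -> (pk P Q k, qk P Q k) \in Q.
Proof.
rewrite /mCI; case: k => [|k] //= /andP[Pk km].
rewrite /pk /qk -surjective_pairing nth_cat /= ifN; last by rewrite -leqNgt.
by rewrite mem_nth // ltn_subLR.
Qed.

Lemma Icon_shift_Jcon i j k p : (i, j) \notin P -> (k <= m)%N ->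
  leZ2 p (mid m) -> Icon P Q i k p -> Jcon P Q j k (addpt p (1, 1)).
Proof.
rewrite -leZ2_shift_corner => ijP + pT; elim: k => [|k IH] km /=.
  exact/Wset_upclosed/pT/leZ2_shift.
case/orP=> [h|h]; first by rewrite IH //; lia.
apply/orP; move: h; case: ifP => kP.
  case: ifP => [/eqP ei|_] h; last first.
    by left; apply: Wset_Jcon; exact: box_xk_shift_Wset h pT.
  case: ifP => [/eqP ej|_]; last by right; exact: box_xk'_shift.
  by case/negP: ijP; rewrite ei ej pair_k_in_P //; lia.
case: ifP => // _ h.
by left; apply: Wset_Jcon; exact: box_xk_shift_Wset h pT.
Qed.

Lemma Jcon_shift_Icon i j k p : (j, i) \notin Q -> (k <= m)%N ->
  leZ2 p (mid m) -> Jcon P Q j k p -> Icon P Q i k (addpt p (1, 1)).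
Proof.
rewrite -leZ2_shift_corner => jiQ + pT; elim: k => [|k IH] km /=.
  exact/Wset_upclosed/pT/leZ2_shift.
case/orP=> [h|h]; first by rewrite IH //; lia.
apply/orP; move: h; case: ifP => kP.
  case: ifP => // _ h.
  by left; apply: Wset_Icon; exact: box_xk_shift_Wset h pT.
case: ifP => [/eqP ej|_] h; last first.
  by left; apply: Wset_Icon; exact: box_xk_shift_Wset h pT.
case: ifP => [/eqP ei|_]; last by right; exact: box_xk'_shift.
by case/negP: jiQ; rewrite ei ej pair_k_in_Q //; lia.
Qed.

End Construction.

Theorem mainTheorem5 (K : fieldType) (n : nat) (P Q : seq (nat * nat))
  (uP : uniq P) (uQ : uniq Q)
  (hP : all (fun ij => (1 <= ij.1 <= n)%N && (1 <= ij.2 <= n)%N) P)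
  (hQ : all (fun ij => (1 <= ij.1 <= n)%N && (1 <= ij.2 <= n)%N) Q)
  (i j : nat) (hi : (1 <= i <= n)%N) (hj : (1 <= j <= n)%N) :
  let c : pt := ((2 * mCI P Q + 1)%:Z, (2 * mCI P Q + 1)%:Z) in
  ((i, j) \notin P ->
   let M := intmod K (Ical P Q i) in
   let N := shift1 (intmod K (Jcal P Q j)) in
   [/\ pdim M c = 1%N, pdim N c = 1%N,
       (forall a : K, exists f, is_morph M N f /\ forall x y, f c x y = a),
       (forall f g, is_morph M N f -> is_morph M N g ->
          (forall x y, f c x y = g c x y) -> forall p, f p = g p) &
       (forall f, is_morph M N f -> forall a : K, (forall x y, f c x y = a) ->
          forall p, f p = 0 \/ forall x y, f p x y = a)]) /\
  ((j, i) \notin Q ->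
   let M := intmod K (Jcal P Q j) in
   let N := shift1 (intmod K (Ical P Q i)) in
   [/\ pdim M c = 1%N, pdim N c = 1%N,
       (forall a : K, exists g, is_morph M N g /\ forall x y, g c x y = a),
       (forall f g, is_morph M N f -> is_morph M N g ->
          (forall x y, f c x y = g c x y) -> forall p, f p = g p) &
       (forall g, is_morph M N g -> forall a : K, (forall x y, g c x y = a) ->
          forall p, g p = 0 \/ forall x y, g p x y = a)]).
Proof.
move=> c.
have Wc : Wset (mCI P Q) c by apply: Wset_above_mid; rewrite ?leZ2_refl ?mid_corner.
have up_c q : leZ2 q c -> leZ2 q (corner (mCI P Q)).
  by move/leZ2_trans; apply; exact: mid_corner.
(* shift1 (intmod K J) is convertible to the interval module of J shifted. *)
split=> nPQ; apply: hom_intmod_scalar.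
- exact: Wset_Icon.
- exact/Wset_Jcon/Wset_shift_mid.
- by move=> p /Jcon_below; rewrite leZ2_shift_corner.
- by move=> p q pq /up_c; exact: Icon_upclosed.
- by move=> p; exact: Icon_shift_Jcon.
- exact: Wset_Jcon.
- exact/Wset_Icon/Wset_shift_mid.
- by move=> p /Icon_below; rewrite leZ2_shift_corner.
- by move=> p q pq /up_c; exact: Jcon_upclosed.
- by move=> p; exact: Jcon_shift_Icon.
Qed.
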